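(* Let $A$ be a finite dimensional algebra over a field and $\underline{M}=(M,M')$ a bonded pair of $A$-$A$-bimodules. Then the space $\mathbb{T}_A(\underline{M})=\bigoplus_{i\ge1}M^{\otimes_Ai}\oplus A\oplus\bigoplus_{i\le-1}M'^{\otimes_A -i}$ (with $A$ in degree $0$, $M^{\otimes_A i}$ in degree $i$, $M'^{\otimes_A -i}$ in degree $i<0$) is a $\mathbb{Z}$-graded algebra, whose product of an element of degree $i_1$ with an element of degree $i_2$ is the natural bimodule homomorphism into the degree $i_1+i_2$ component obtained by concatenating tensors and applying the bonding maps $M\otimes_AM'\to A$, $M'\otimes_AM\to A$ to adjacent factors as many times as possible (with $M^{\otimes_A0}=M'^{\otimes_A0}=A$).
   Context: A pair $\underline M=(M,M')$ of $A$-$A$-bimodules is bonded if there are bimodule homomorphisms $M\otimes_AM'\to A$ and $M'\otimes_AM\to A$ such that the two resulting maps $M\otimes_AM'\otimes_AM\to M$ are equal and the two resulting maps $M'\otimes_AM\otimes_AM'\to M'$ are equal. *)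

From HB Require Import structures.
From mathcomp Require Import all_boot all_order all_algebra.
From mathcomp Require Import falgebra.
Set Implicit Arguments. Unset Strict Implicit. Unset Printing Implicit Defensive.
Import GRing.Theory.
Local Open Scope ring_scope.

Section TensorAlgebraOfBondedPair.
Variables (K : fieldType) (A : falgType K).

Definition is_bimod (M : lmodType K) (l : A -> M -> M) (r : M -> A -> M) : Prop :=
     (forall a b m, l (a + b) m = l a m + l b m)
  /\ (forall a m n, l a (m + n) = l a m + l a n)
  /\ (forall k a m, l (k *: a) m = k *: l a m)
  /\ (forall k a m, l a (k *: m) = k *: l a m)
  /\ (forall m, l 1 m = m)
  /\ (forall a b m, l (a * b) m = l a (l b m))
  /\ (forall m a b, r m (a + b) = r m a + r m b)
  /\ (forall m n a, r (m + n) a = r m a + r n a)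
  /\ (forall k m a, r m (k *: a) = k *: r m a)
  /\ (forall k m a, r (k *: m) a = k *: r m a)
  /\ (forall m, r m 1 = m)
  /\ (forall m a b, r m (a * b) = r (r m a) b)
  /\ (forall a m b, r (l a m) b = l a (r m b)).

Variables (M M' : lmodType K).
Variables (lM : A -> M -> M) (rM : M -> A -> M).
Variables (lM' : A -> M' -> M') (rM' : M' -> A -> M').

(* An A-A-bimodule homomorphism  N1 (x)_A N2 -> A, written out as the
   corresponding A-balanced K-bilinear map N1 x N2 -> A which is left
   A-linear in the first and right A-linear in the second argument. *)
Definition bal_bihom (N1 N2 : lmodType K) (l1 : A -> N1 -> N1) (r1 : N1 -> A -> N1)
    (l2 : A -> N2 -> N2) (r2 : N2 -> A -> N2) (f : N1 -> N2 -> A) : Prop :=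
     (forall x y n, f (x + y) n = f x n + f y n)
  /\ (forall m x y, f m (x + y) = f m x + f m y)
  /\ (forall k m n, f (k *: m) n = k *: f m n)
  /\ (forall k m n, f m (k *: n) = k *: f m n)
  /\ (forall m a n, f (r1 m a) n = f m (l2 a n))
  /\ (forall a m n, f (l1 a m) n = a * f m n)
  /\ (forall m n a, f m (r2 n a) = f m n * a).

Definition bonded (phi : M -> M' -> A) (psi : M' -> M -> A) : Prop :=
  [/\ bal_bihom lM rM lM' rM' phi,
      bal_bihom lM' rM' lM rM psi,
      (forall (m : M) (m' : M') (m'' : M), lM (phi m m') m'' = rM m (psi m' m'')) &
      (forall (m' : M') (m : M) (m'' : M'), lM' (psi m' m) m'' = rM' m' (phi m m''))].

(* ---- The space T_A(M, M') ----
   Pure tensors ("words"): an element a of A (degree 0), a nonempty list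
   m_1 (x) ... (x) m_i of elements of M (degree i >= 1), or a nonempty list
   m'_1 (x) ... (x) m'_j of elements of M' (degree -j <= -1).  *)
Definition word := (A + (M * seq M) + (M' * seq M'))%type.

Definition W0 (a : A) : word := inl (inl a).
Definition mkP (u : seq M) : word :=
  if u is m :: s then inl (inr (m, s)) else W0 0.
Definition mkN (u : seq M') : word :=
  if u is m :: s then inr (m, s) else W0 0.

Definition deg (w : word) : int :=
  match w with
  | inl (inl _) => 0
  | inl (inr (_, s)) => (size s).+1%:Z
  | inr (_, s) => - (size s).+1%:Z
  end.

(* Formal K-linear combinations of pure tensors (the free K-vector space on
   words), and the coefficient of a word in such a combination. *)
Definition fsum := seq (K * word).
Definition coef (s : fsum) (w : word) : K :=
  \sum_(p <- s) (if p.2 == w then p.1 else 0).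

(* Defining relations of the tensor powers over A: multilinearity and
   A-balancedness in every slot of M^{(x)_A i} and M'^{(x)_A j}; in degree 0
   the relations of the K-vector space A itself. *)
Inductive trel : fsum -> Prop :=
  | rel0_add a b : trel [:: (1, W0 (a + b)); (-1, W0 a); (-1, W0 b)]
  | rel0_scale k a : trel [:: (1, W0 (k *: a)); (- k, W0 a)]
  | relP_add (p q : seq M) x y :
      trel [:: (1, mkP (p ++ (x + y) :: q)); (-1, mkP (p ++ x :: q));
               (-1, mkP (p ++ y :: q))]
  | relP_scale (p q : seq M) k x :
      trel [:: (1, mkP (p ++ (k *: x) :: q)); (- k, mkP (p ++ x :: q))]
  | relP_bal (p q : seq M) x y a :
      trel [:: (1, mkP (p ++ rM x a :: y :: q)); (-1, mkP (p ++ x :: lM a y :: q))]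
  | relN_add (p q : seq M') x y :
      trel [:: (1, mkN (p ++ (x + y) :: q)); (-1, mkN (p ++ x :: q));
               (-1, mkN (p ++ y :: q))]
  | relN_scale (p q : seq M') k x :
      trel [:: (1, mkN (p ++ (k *: x) :: q)); (- k, mkN (p ++ x :: q))]
  | relN_bal (p q : seq M') x y a :
      trel [:: (1, mkN (p ++ rM' x a :: y :: q)); (-1, mkN (p ++ x :: lM' a y :: q))].

Definition inspan (s : fsum) : Prop :=
  exists rs : seq (K * fsum),
    (forall r, r \in rs -> trel r.2) /\
    (forall w, coef s w = \sum_(r <- rs) r.1 * coef r.2 w).

Definition fopp (s : fsum) : fsum := [seq (- p.1, p.2) | p <- s].
Definition fscale (k : K) (s : fsum) : fsum := [seq (k * p.1, p.2) | p <- s].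

(* Equality in T_A(M) = (+)_{i>=1} M^{(x)i} (+) A (+) (+)_{i<=-1} M'^{(x)-i}. *)
Definition teqv (s t : fsum) : Prop := inspan (s ++ fopp t).

Definition lactP (a : A) (m : M) (s : seq M) : word := mkP (lM a m :: s).
Definition lactN (a : A) (m : M') (s : seq M') : word := mkN (lM' a m :: s).
Definition ractP (m : M) (s : seq M) (a : A) : word :=
  mkP (rev (match rev (m :: s) with x :: r => rM x a :: r | [::] => [::] end)).
Definition ractN (m : M') (s : seq M') (a : A) : word :=
  mkN (rev (match rev (m :: s) with x :: r => rM' x a :: r | [::] => [::] end)).

(* contrPN rs t a: contract (rev rs) (x) a (x) t, where rs is a reversed list
   of elements of M, a is the current middle element of A, t a list in M'. *)
Fixpoint contrPN (phi : M -> M' -> A) (rs : seq M) (t : seq M') (a : A) : word :=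
  match rs, t with
  | m :: rs', m' :: t' => contrPN phi rs' t' (phi (rM m a) m')
  | [::], [::] => W0 a
  | [::], m' :: t' => mkN (lM' a m' :: t')
  | m :: rs', [::] => mkP (rev (rM m a :: rs'))
  end.
Fixpoint contrNP (psi : M' -> M -> A) (rs : seq M') (t : seq M) (a : A) : word :=
  match rs, t with
  | m' :: rs', m :: t' => contrNP psi rs' t' (psi (rM' m' a) m)
  | [::], [::] => W0 a
  | [::], m :: t' => mkP (lM a m :: t')
  | m' :: rs', [::] => mkN (rev (rM' m' a :: rs'))
  end.

Definition wmul (phi : M -> M' -> A) (psi : M' -> M -> A) (w1 w2 : word) : word :=
  match w1, w2 with
  | inl (inl a), inl (inl b) => W0 (a * b)
  | inl (inl a), inl (inr (m, s)) => lactP a m s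
  | inl (inl a), inr (m, s) => lactN a m s
  | inl (inr (m, s)), inl (inl b) => ractP m s b
  | inr (m, s), inl (inl b) => ractN m s b
  | inl (inr (m, s)), inl (inr (n, t)) => mkP ((m :: s) ++ (n :: t))
  | inr (m, s), inr (n, t) => mkN ((m :: s) ++ (n :: t))
  | inl (inr (m, s)), inr (n, t) => contrPN phi (rev (m :: s)) (n :: t) 1
  | inr (m, s), inl (inr (n, t)) => contrNP psi (rev (m :: s)) (n :: t) 1
  end.

Definition fmul phi psi (s t : fsum) : fsum :=
  [seq (p.1 * q.1, wmul phi psi p.2 q.2) | p <- s, q <- t].
Definition fone : fsum := [:: (1, W0 1)].

Definition is_graded_algebra phi psi : Prop :=
  [/\ (forall w1 w2, deg (wmul phi psi w1 w2) = deg w1 + deg w2),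
      (forall s s' t t', teqv s s' -> teqv t t' ->
          teqv (fmul phi psi s t) (fmul phi psi s' t')),
      (forall k s t, teqv (fmul phi psi (fscale k s) t) (fscale k (fmul phi psi s t))
                  /\ teqv (fmul phi psi s (fscale k t)) (fscale k (fmul phi psi s t))),
      (forall s t u, teqv (fmul phi psi (fmul phi psi s t) u)
                          (fmul phi psi s (fmul phi psi t u))) &
      (forall s, teqv (fmul phi psi fone s) s /\ teqv (fmul phi psi s fone) s)].

End TensorAlgebraOfBondedPair.

From HB Require Import structures.
From mathcomp Require Import all_boot all_order all_algebra.
From mathcomp Require Import falgebra.
From mathcomp Require Import ring zify.
Set Implicit Arguments. Unset Strict Implicit. Unset Printing Implicit Defensive.
Import GRing.Theory.
Local Open Scope ring_scope.

(* The product of pure tensors is compatible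
   with these relations in each argument and associative modulo them; both facts then
   extend bilinearly to formal sums.  Peeling off the first tensor factor reduces left
   compatibility and associativity to left factors of degree 0 or +-1, and the bonding
   identities are exactly what lets a factor of degree 1 associate with a contraction.
   Exchanging M with M' (and phi with psi) negates degrees and commutes with the
   product, so only left factors of nonnegative degree need to be treated. *)

Section Lists.
Variables (T : Type) (f : T -> T).

Fixpoint lastmap (s : seq T) : seq T :=
  match s with
  | [::] => [::]
  | x :: s' => if s' is [::] then [:: f x] else x :: lastmap s'
  end.

Definition firstmap (s : seq T) : seq T := if s is x :: s' then f x :: s' else [::].

Lemma lastmap_cons2 x y s : lastmap [:: x, y & s] = x :: lastmap (y :: s).
Proof. by []. Qed.

Lemma lastmap_cons y s : (0 < size s)%N -> lastmap (y :: s) = y :: lastmap s.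
Proof. by case: s. Qed.

Lemma lastmap_rcons s x : lastmap (rcons s x) = rcons s (f x).
Proof. by elim: s => [//|y s IH]; rewrite rcons_cons lastmap_cons ?IH // size_rcons. Qed.

Lemma lastmap_rev s :
  rev (match rev s with x :: r => f x :: r | [::] => [::] end) = lastmap s.
Proof. by case/lastP: s => [//|s x]; rewrite rev_rcons rev_cons revK lastmap_rcons. Qed.

Lemma lastmap_cat p x q : lastmap (p ++ x :: q) = p ++ lastmap (x :: q).
Proof. by elim: p => [//|y p IH]; rewrite cat_cons lastmap_cons ?IH // size_cat addnS. Qed.

Lemma lastmap_id s : f =1 id -> lastmap s = s.
Proof. by move=> fE; elim: s => [//|y s IH] /=; case: s IH => [|z s] IH; rewrite ?fE ?IH. Qed.

Lemma size_lastmap s : size (lastmap s) = size s.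
Proof. by elim: s => [//|y s IH] /=; case: s IH => [|z s] IH //=; rewrite IH. Qed.

Lemma size_firstmap s : size (firstmap s) = size s.
Proof. by case: s. Qed.

Lemma firstmap_cat p x q :
  firstmap (p ++ x :: q) = if p is [::] then f x :: q else firstmap p ++ x :: q.
Proof. by case: p. Qed.

Lemma firstmap_catl s s' : (0 < size s)%N -> firstmap (s ++ s') = firstmap s ++ s'.
Proof. by case: s. Qed.

Lemma rev_cons_cat x (s : seq T) : rev (x :: s) = rev s ++ [:: x].
Proof. by rewrite rev_cons cats1. Qed.

Lemma rev_cons2_cat x y (s : seq T) : rev [:: x, y & s] = rev s ++ [:: y; x].
Proof. by rewrite !rev_cons_cat -catA. Qed.

Lemma rev_cat1 (s : seq T) x : rev (s ++ [:: x]) = x :: rev s.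
Proof. by rewrite cats1 rev_rcons. Qed.

Lemma size_cat_cons_gt0 (p q : seq T) x : (0 < size (p ++ x :: q))%N.
Proof. by rewrite size_cat addnS. Qed.

End Lists.

#[local] Hint Resolve size_cat_cons_gt0 : core.

Lemma firstmap_lastmap (T : Type) (f g : T -> T) s : (forall x, f (g x) = g (f x)) ->
  firstmap f (lastmap g s) = lastmap g (firstmap f s).
Proof. by move=> fg; case: s => [//|x [|y s]] /=; rewrite ?fg. Qed.

Section BimodTheory.
Variables (K : fieldType) (A : falgType K) (N : lmodType K).
Variables (l : A -> N -> N) (r : N -> A -> N).
Hypothesis HN : is_bimod l r.

Lemma lactDl a b m : l (a + b) m = l a m + l b m. Proof. by case: HN. Qed.
Lemma lactDr a m n : l a (m + n) = l a m + l a n. Proof. by case: HN => _ []. Qed.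
Lemma lactZl k a m : l (k *: a) m = k *: l a m. Proof. by case: HN => _ [] _ []. Qed.
Lemma lactZr k a m : l a (k *: m) = k *: l a m. Proof. by case: HN => _ [] _ [] _ []. Qed.
Lemma lact1 m : l 1 m = m. Proof. by case: HN => _ [] _ [] _ [] _ []. Qed.
Lemma lactM a b m : l (a * b) m = l a (l b m).
Proof. by case: HN => _ [] _ [] _ [] _ [] _ []. Qed.
Lemma ractDr m a b : r m (a + b) = r m a + r m b.
Proof. by case: HN => _ [] _ [] _ [] _ [] _ [] _ []. Qed.
Lemma ractDl m n a : r (m + n) a = r m a + r n a.
Proof. by case: HN => _ [] _ [] _ [] _ [] _ [] _ [] _ []. Qed.
Lemma ractZr k m a : r m (k *: a) = k *: r m a.
Proof. by case: HN => _ [] _ [] _ [] _ [] _ [] _ [] _ [] _ []. Qed.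
Lemma ractZl k m a : r (k *: m) a = k *: r m a.
Proof. by case: HN => _ [] _ [] _ [] _ [] _ [] _ [] _ [] _ [] _ []. Qed.
Lemma ract1 m : r m 1 = m.
Proof. by case: HN => _ [] _ [] _ [] _ [] _ [] _ [] _ [] _ [] _ [] _ []. Qed.
Lemma ractM m a b : r m (a * b) = r (r m a) b.
Proof. by case: HN => _ [] _ [] _ [] _ [] _ [] _ [] _ [] _ [] _ [] _ [] _ []. Qed.
Lemma lractA a m b : r (l a m) b = l a (r m b).
Proof. by case: HN => _ [] _ [] _ [] _ [] _ [] _ [] _ [] _ [] _ [] _ [] _ []. Qed.

End BimodTheory.

Section BihomTheory.
Variables (K : fieldType) (A : falgType K) (N1 N2 : lmodType K).
Variables (l1 : A -> N1 -> N1) (r1 : N1 -> A -> N1).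
Variables (l2 : A -> N2 -> N2) (r2 : N2 -> A -> N2) (f : N1 -> N2 -> A).
Hypothesis Hf : bal_bihom l1 r1 l2 r2 f.

Lemma bihomDl x y n : f (x + y) n = f x n + f y n. Proof. by case: Hf. Qed.
Lemma bihomDr m x y : f m (x + y) = f m x + f m y. Proof. by case: Hf => _ []. Qed.
Lemma bihomZl k m n : f (k *: m) n = k *: f m n. Proof. by case: Hf => _ [] _ []. Qed.
Lemma bihomZr k m n : f m (k *: n) = k *: f m n. Proof. by case: Hf => _ [] _ [] _ []. Qed.
Lemma bihom_bal m a n : f (r1 m a) n = f m (l2 a n).
Proof. by case: Hf => _ [] _ [] _ [] _ []. Qed.
Lemma bihom_lact a m n : f (l1 a m) n = a * f m n.
Proof. by case: Hf => _ [] _ [] _ [] _ [] _ []. Qed.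
Lemma bihom_ract m n a : f m (r2 n a) = f m n * a.
Proof. by case: Hf => _ [] _ [] _ [] _ [] _ []. Qed.

End BihomTheory.

Definition mapw (R W W' : Type) (G : W -> W') (s : seq (R * W)) : seq (R * W') :=
  [seq (p.1, G p.2) | p <- s].

Lemma mapw_cons (R W W' : Type) (G : W -> W') (k : R) u s :
  mapw G ((k, u) :: s) = (k, G u) :: mapw G s.
Proof. by []. Qed.

Lemma mapw_nil (R W W' : Type) (G : W -> W') : mapw G ([::] : seq (R * W)) = [::].
Proof. by []. Qed.

Lemma mapw_comp (R W W' W'' : Type) (G : W' -> W'') (H : W -> W') (s : seq (R * W)) :
  mapw G (mapw H s) = mapw (G \o H) s.
Proof. by rewrite /mapw -map_comp. Qed.

Lemma mapw_id (R W : Type) (G : W -> W) (s : seq (R * W)) : G =1 id -> mapw G s = s.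
Proof. by move=> GE; rewrite /mapw -[RHS]map_id; apply: eq_map => -[k w]; rewrite /= GE. Qed.

Section Span.
Variables (K : fieldType) (A : falgType K) (M M' : lmodType K).
Variables (lM : A -> M -> M) (rM : M -> A -> M) (lM' : A -> M' -> M') (rM' : M' -> A -> M').

Local Notation word := (word A M M').
Local Notation fsum := (fsum A M M').
Local Notation span := (inspan lM rM lM' rM').
Implicit Types (s t : fsum) (w : word).

Lemma wordP (P : word -> Prop) : (forall a, P (W0 M M' a)) ->
  (forall m l, P (mkP A M' (m :: l))) -> (forall m l, P (mkN A M (m :: l))) -> forall w, P w.
Proof. by move=> PZ PP PN [[a|[m l]]|[m l]]; [apply: PZ|apply: PP|apply: PN]. Qed.

Definition feval (g : word -> K) s : K := \sum_(p <- s) p.1 * g p.2.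

Lemma feval_nil g : feval g [::] = 0. Proof. by rewrite /feval big_nil. Qed.
Lemma feval_cons g p s : feval g (p :: s) = p.1 * g p.2 + feval g s.
Proof. by rewrite /feval big_cons. Qed.
Lemma feval_cat g s t : feval g (s ++ t) = feval g s + feval g t.
Proof. by rewrite /feval big_cat. Qed.
Lemma feval_flatten g L : feval g (flatten L) = \sum_(l <- L) feval g l.
Proof. by rewrite /feval big_flatten. Qed.
Lemma feval_mapw g G s : feval g (mapw G s) = feval (g \o G) s.
Proof. by rewrite /feval big_map. Qed.
Lemma eq_feval g1 g2 s : g1 =1 g2 -> feval g1 s = feval g2 s.
Proof. by move=> E; apply: eq_bigr => p _; rewrite E. Qed.

Lemma feval_scale g k s : feval g (fscale k s) = k * feval g s.
Proof. by rewrite /feval big_map mulr_sumr; apply: eq_bigr => p _ /=; rewrite mulrA. Qed.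

Lemma feval_opp g s : feval g (fopp s) = - feval g s.
Proof. by rewrite /feval big_map -sumrN; apply: eq_bigr => p _ /=; rewrite mulNr. Qed.

Lemma fevalB g1 g2 s : feval (fun u => g1 u - g2 u) s = feval g1 s - feval g2 s.
Proof. by rewrite /feval -sumrB; apply: eq_bigr => p _; rewrite mulrBr. Qed.

Lemma fevalD g1 g2 s : feval (fun u => g1 u + g2 u) s = feval g1 s + feval g2 s.
Proof. by rewrite /feval -big_split; apply: eq_bigr => p _; rewrite mulrDr. Qed.

Lemma fevalZ k g s : feval (fun u => k * g u) s = k * feval g s.
Proof. by rewrite /feval mulr_sumr; apply: eq_bigr => p _ /=; rewrite mulrCA. Qed.

Lemma coefE s w : coef s w = feval (fun u => (u == w)%:R) s.
Proof. by apply: eq_bigr => p _; case: eqP; rewrite ?mulr1 ?mulr0. Qed.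

Lemma coef_cons p s w : coef (p :: s) w = p.1 * (p.2 == w)%:R + coef s w.
Proof. by rewrite !coefE feval_cons. Qed.
Lemma coef_nil w : coef [::] w = 0. Proof. by rewrite coefE feval_nil. Qed.
Lemma coef_cat s t w : coef (s ++ t) w = coef s w + coef t w.
Proof. by rewrite !coefE feval_cat. Qed.

Lemma feval_coef_seq g s (U : seq word) : uniq U -> {subset [seq p.2 | p <- s] <= U} ->
  feval g s = \sum_(u <- U) coef s u * g u.
Proof.
move=> Uu; elim: s => [|p s IH] sub.
  by rewrite feval_nil big1 // => u _; rewrite coef_nil mul0r.
rewrite feval_cons IH; last by move=> u us; apply: sub; rewrite inE us orbT.
have pU : p.2 \in U by apply: sub; rewrite inE eqxx.
under [RHS]eq_bigr => u _ do rewrite coef_cons mulrDl -mulrA.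
rewrite big_split /= -mulr_sumr; congr (_ * _ + _); symmetry.
rewrite (bigD1_seq p.2) //= eqxx mul1r big1 ?addr0 // => u /negPf.
by rewrite eq_sym => ->; rewrite mul0r.
Qed.

Lemma feval_coef g s t : (forall w, coef s w = coef t w) -> feval g s = feval g t.
Proof.
move=> E; set U := undup [seq p.2 | p <- s ++ t].
rewrite !(@feval_coef_seq g _ U) ?undup_uniq //.
- by apply: eq_bigr => u _; rewrite E.
- by move=> u ut; rewrite mem_undup map_cat mem_cat ut orbT.
- by move=> u us; rewrite mem_undup map_cat mem_cat us.
Qed.

Lemma span_coef s t : (forall w, coef s w = coef t w) -> span t -> span s.
Proof. by move=> E [rs [Hrs Et]]; exists rs; split => // w; rewrite E. Qed.

Lemma span0 s : (forall w, coef s w = 0) -> span s.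
Proof. by move=> E; exists [::]; split => // w; rewrite E big_nil. Qed.

Lemma span_cat s t : span s -> span t -> span (s ++ t).
Proof.
move=> [rs [Hrs Es]] [rt [Hrt Et]]; exists (rs ++ rt); split.
  by move=> r; rewrite mem_cat => /orP [] ?; [apply: Hrs|apply: Hrt].
by move=> w; rewrite big_cat /= -Es -Et coef_cat.
Qed.

Lemma span_scale k s : span s -> span (fscale k s).
Proof.
move=> [rs [Hrs Es]]; exists [seq (k * r.1, r.2) | r <- rs]; split.
  by move=> r /mapP [r0 r0in ->]; exact: Hrs r0in.
move=> w; rewrite coefE feval_scale -coefE Es big_map mulr_sumr.
by apply: eq_bigr => r _ /=; rewrite mulrA.
Qed.

Lemma span_trel r : trel lM rM lM' rM' r -> span r.
Proof.
move=> Hr; exists [:: (1, r)]; split; first by move=> r'; rewrite inE => /eqP ->.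
by move=> w; rewrite big_cons big_nil mul1r addr0.
Qed.

Lemma span_flatten L : (forall l, l \in L -> span l) -> span (flatten L).
Proof.
elim: L => [_|l L IH HL]; first by apply: span0 => w; rewrite coef_nil.
apply: span_cat; first by apply: HL; rewrite inE eqxx.
by apply: IH => l' l'L; apply: HL; rewrite inE l'L orbT.
Qed.

Lemma span_comb (L : seq (K * fsum)) s : (forall l, l \in L -> span l.2) ->
  (forall w, coef s w = \sum_(l <- L) l.1 * coef l.2 w) -> span s.
Proof.
move=> HL E; apply: (@span_coef _ (flatten [seq fscale l.1 l.2 | l <- L])).
  move=> w; rewrite E coefE feval_flatten big_map; apply: eq_bigr => l _.
  by rewrite feval_scale coefE.
by apply: span_flatten => l' /mapP [l lL ->]; apply: span_scale; apply: HL.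
Qed.

Definition fbind (F : word -> fsum) s : fsum := flatten [seq fscale p.1 (F p.2) | p <- s].

Lemma coef_fbind F s w : coef (fbind F s) w = feval (fun u => coef (F u) w) s.
Proof.
rewrite coefE feval_flatten big_map; apply: eq_bigr => p _.
by rewrite feval_scale coefE.
Qed.

Lemma span_fbind F s : (forall u, span (F u)) -> span (fbind F s).
Proof. by move=> HF; apply: span_flatten => l /mapP [p _ ->]; apply: span_scale. Qed.

Definition weq x y := span [:: (1, x); (-1, y)].
Definition wadd u v w := span [:: (1, u); (-1, v); (-1, w)].
Definition wscale k u v := span [:: (1, u); (- k, v)].

Lemma weq_refl x : weq x x.
Proof. by apply: span0 => w; rewrite !coef_cons coef_nil /=; ring. Qed.

Lemma weq_sym x y : weq x y -> weq y x.
Proof.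
move=> /(span_scale (-1)); apply: span_coef => w.
by rewrite !coefE feval_scale !feval_cons feval_nil /=; ring.
Qed.

Lemma weq_trans x y z : weq x y -> weq y z -> weq x z.
Proof.
move=> Hxy Hyz; apply: (span_coef _ (span_cat Hxy Hyz)) => w.
by rewrite coef_cat !coef_cons !coef_nil /=; ring.
Qed.

Definition resp (G : word -> word) := forall s, span s -> span (mapw G s).

Lemma resp_of_rel G : (forall r, trel lM rM lM' rM' r -> span (mapw G r)) -> resp G.
Proof.
move=> HG s [rs [Hrs Es]].
apply: (@span_comb [seq (r.1, mapw G r.2) | r <- rs]).
  by move=> l /mapP [r rin ->]; apply: HG; apply: Hrs.
move=> w; rewrite big_map coefE feval_mapw.
rewrite (@feval_coef _ s (flatten [seq fscale r.1 r.2 | r <- rs])); last first.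
  move=> w'; rewrite Es coefE feval_flatten big_map.
  by apply: eq_bigr => r _; rewrite feval_scale coefE.
rewrite feval_flatten big_map; apply: eq_bigr => r _.
by rewrite feval_scale coefE feval_mapw.
Qed.

Lemma resp_weq G H : (forall u, weq (G u) (H u)) -> resp H -> resp G.
Proof.
move=> E HH s Hs.
apply: (span_coef _ (span_cat (HH s Hs) (span_fbind s (F := fun u => [:: (1, G u); (-1, H u)]) E))).
move=> w; rewrite coef_cat coef_fbind !coefE !feval_mapw -fevalD.
by apply: eq_feval => u /=; rewrite !coef_cons coef_nil /=; ring.
Qed.

Lemma resp_comp G H : resp G -> resp H -> resp (G \o H).
Proof. by move=> HG HH s /HH /HG; rewrite mapw_comp. Qed.

Inductive trel_nonneg : fsum -> Prop :=
  | nrel0_add a b : trel_nonneg [:: (1, W0 M M' (a + b)); (-1, W0 M M' a); (-1, W0 M M' b)]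
  | nrel0_scale k a : trel_nonneg [:: (1, W0 M M' (k *: a)); (- k, W0 M M' a)]
  | nrelP_add (p q : seq M) x y :
      trel_nonneg [:: (1, mkP A M' (p ++ (x + y) :: q)); (-1, mkP A M' (p ++ x :: q));
                      (-1, mkP A M' (p ++ y :: q))]
  | nrelP_scale (p q : seq M) k x :
      trel_nonneg [:: (1, mkP A M' (p ++ (k *: x) :: q)); (- k, mkP A M' (p ++ x :: q))]
  | nrelP_bal (p q : seq M) x y a :
      trel_nonneg [:: (1, mkP A M' (p ++ rM x a :: y :: q));
                      (-1, mkP A M' (p ++ x :: lM a y :: q))].

End Span.

Definition wswap (K : fieldType) (A : falgType K) (M M' : lmodType K)
    (w : word A M M') : word A M' M :=
  match w with
  | inl (inl a) => inl (inl a)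
  | inl (inr p) => inr p
  | inr p => inl (inr p)
  end.

Lemma wswapK (K : fieldType) (A : falgType K) (M M' : lmodType K) :
  cancel (@wswap K A M M') (@wswap K A M' M).
Proof. by case=> [[]|]. Qed.

Lemma bonded_swap (K : fieldType) (A : falgType K) (M M' : lmodType K)
    (lM : A -> M -> M) (rM : M -> A -> M) (lM' : A -> M' -> M') (rM' : M' -> A -> M')
    (phi : M -> M' -> A) (psi : M' -> M -> A) :
  bonded lM rM lM' rM' phi psi -> bonded lM' rM' lM rM psi phi.
Proof. by case. Qed.

Section Swap.
Variables (K : fieldType) (A : falgType K) (M M' : lmodType K).
Variables (lM : A -> M -> M) (rM : M -> A -> M) (lM' : A -> M' -> M') (rM' : M' -> A -> M').
Variables (phi : M -> M' -> A) (psi : M' -> M -> A).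

Local Notation span := (inspan lM rM lM' rM').
Local Notation span' := (inspan lM' rM' lM rM).

Lemma wswap_mkP (u : seq M) : wswap (mkP A M' u) = mkN A M' u.
Proof. by case: u. Qed.

Lemma wswap_mkN (u : seq M') : wswap (mkN A M u) = mkP A M u.
Proof. by case: u. Qed.

Lemma wswap_contrPN rs t a :
  wswap (contrPN rM lM' phi rs t a) = contrNP lM' rM phi rs t a.
Proof. by elim: rs t a => [|m rs IH] [|n t] a //=; rewrite wswap_mkP. Qed.

Lemma wswap_contrNP rs t a :
  wswap (contrNP lM rM' psi rs t a) = contrPN rM' lM psi rs t a.
Proof. by elim: rs t a => [|m rs IH] [|n t] a //=; rewrite wswap_mkN. Qed.

Lemma wmul_swap x y :
  wswap (wmul lM rM lM' rM' phi psi x y) = wmul lM' rM' lM rM psi phi (wswap x) (wswap y).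
Proof.
case: x => [[a|[m s]]|[m s]]; case: y => [[b|[n t]]|[n t]] //=;
  by rewrite ?wswap_mkP ?wswap_mkN ?wswap_contrPN ?wswap_contrNP.
Qed.

Lemma deg_swap (w : word A M M') : deg (wswap w) = - deg w.
Proof. by case: w => [[a|[m s]]|[m s]] //=; rewrite opprK. Qed.

Lemma coef_swap s w : coef (mapw (@wswap K A M M') s) w = coef s (wswap w).
Proof.
rewrite /coef big_map; apply: eq_bigr => p _ /=.
by rewrite (can2_eq (@wswapK K A M M') (@wswapK K A M' M)).
Qed.

Lemma trel_swap r : trel lM rM lM' rM' r -> trel lM' rM' lM rM (mapw (@wswap K A M M') r).
Proof. by case=> * /=; rewrite ?wswap_mkP ?wswap_mkN; constructor. Qed.

Lemma trel_split r : trel lM rM lM' rM' r ->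
  trel_nonneg lM rM r \/ trel_nonneg lM' rM' (mapw (@wswap K A M M') r).
Proof.
by case=> *; [left|left|left|left|left|right|right|right]; rewrite /= ?wswap_mkN; constructor.
Qed.

Lemma span_swap s : span s -> span' (mapw (@wswap K A M M') s).
Proof.
move=> [rs [Hrs Es]]; exists [seq (r.1, mapw (@wswap K A M M') r.2) | r <- rs]; split.
  by move=> r /mapP [r0 r0in ->]; exact: trel_swap (Hrs _ r0in).
move=> w; rewrite coef_swap Es big_map; apply: eq_bigr => r _.
by rewrite coef_swap.
Qed.

End Swap.

Lemma span_unswap (K : fieldType) (A : falgType K) (M M' : lmodType K)
    (lM : A -> M -> M) (rM : M -> A -> M) (lM' : A -> M' -> M') (rM' : M' -> A -> M')
    (s : fsum A M M') :
  inspan lM' rM' lM rM (mapw (@wswap K A M M') s) -> inspan lM rM lM' rM' s.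
Proof. by move/span_swap; rewrite mapw_comp mapw_id //; apply: wswapK. Qed.

Section SwapResp.
Variables (K : fieldType) (A : falgType K) (M M' : lmodType K).
Variables (lM : A -> M -> M) (rM : M -> A -> M) (lM' : A -> M' -> M') (rM' : M' -> A -> M').

Local Notation word' := (word A M' M).
Local Notation word := (word A M M').
Local Notation swap := (@wswap K A M M').

Lemma weq_unswap (x y : word) :
  weq lM' rM' lM rM (swap x) (swap y) -> weq lM rM lM' rM' x y.
Proof. exact: (span_unswap (s := [:: (1, x); (-1, y)])). Qed.

Lemma mapw_swap_morph (G : word -> word) (G' : word' -> word') (s : fsum A M M') :
  {morph swap : u / G u >-> G' u} -> mapw G' (mapw swap s) = mapw swap (mapw G s).
Proof. by move=> GG'; rewrite !mapw_comp; apply: eq_map => -[k u] /=; rewrite GG'. Qed.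

Lemma resp_unswap (G : word -> word) (G' : word' -> word') :
  {morph swap : u / G u >-> G' u} -> resp lM' rM' lM rM G' -> resp lM rM lM' rM' G.
Proof.
move=> GG' HG' s /span_swap /HG'.
by rewrite (mapw_swap_morph _ GG'); apply: span_unswap.
Qed.

Lemma resp_of_nonneg (G : word -> word) (G' : word' -> word') :
  {morph swap : u / G u >-> G' u} ->
  (forall r, trel_nonneg lM rM r -> inspan lM rM lM' rM' (mapw G r)) ->
  (forall r, trel_nonneg lM' rM' r -> inspan lM' rM' lM rM (mapw G' r)) ->
  resp lM rM lM' rM' G.
Proof.
move=> GG' HG HG'; apply: resp_of_rel => r /trel_split [/HG //|/HG'].
by rewrite (mapw_swap_morph _ GG'); apply: span_unswap.
Qed.

End SwapResp.

Section Positive.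
Variables (K : fieldType) (A : falgType K) (M M' : lmodType K).
Variables (lM : A -> M -> M) (rM : M -> A -> M) (lM' : A -> M' -> M') (rM' : M' -> A -> M').
Variables (phi : M -> M' -> A) (psi : M' -> M -> A).
Hypotheses (HM : is_bimod lM rM) (HM' : is_bimod lM' rM')
  (Hbond : bonded lM rM lM' rM' phi psi).

Let Hphi : bal_bihom lM rM lM' rM' phi. Proof. by case: Hbond. Qed.
Let Hpsi : bal_bihom lM' rM' lM rM psi. Proof. by case: Hbond. Qed.
Let bondM m m' m'' : lM (phi m m') m'' = rM m (psi m' m''). Proof. by case: Hbond. Qed.

Local Notation W0 := (@W0 K A M M').
Local Notation mkP := (@mkP K A M M').
Local Notation mkN := (@mkN K A M M').
Local Notation wm := (wmul lM rM lM' rM' phi psi).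
Local Notation cPN := (contrPN rM lM' phi).
Local Notation cNP := (contrNP lM rM' psi).
Local Notation span := (inspan lM rM lM' rM').
Local Notation weq := (weq lM rM lM' rM').
Local Notation wadd := (wadd lM rM lM' rM').
Local Notation wscale := (wscale lM rM lM' rM').

(* In lemma names, Z, P and N refer to words of degree 0, > 0 and < 0, P1 and N1 to
   words of degree 1 and -1, wmr to right multiplication and A to associativity. *)

Lemma wm_ZP a l : (0 < size l)%N -> wm (W0 a) (mkP l) = mkP (firstmap (lM a) l).
Proof. by case: l. Qed.
Lemma wm_ZN a l : (0 < size l)%N -> wm (W0 a) (mkN l) = mkN (firstmap (lM' a) l).
Proof. by case: l. Qed.
Lemma wm_PZ l b : (0 < size l)%N -> wm (mkP l) (W0 b) = mkP (lastmap (rM^~ b) l).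
Proof. by case: l => [//|m l] _; exact: (congr1 mkP (lastmap_rev _ _)). Qed.
Lemma wm_NZ l b : (0 < size l)%N -> wm (mkN l) (W0 b) = mkN (lastmap (rM'^~ b) l).
Proof. by case: l => [//|m l] _; exact: (congr1 mkN (lastmap_rev _ _)). Qed.
Lemma wm_PP l l' : (0 < size l)%N -> (0 < size l')%N -> wm (mkP l) (mkP l') = mkP (l ++ l').
Proof. by case: l => [//|m l]; case: l'. Qed.
Lemma wm_NN l l' : (0 < size l)%N -> (0 < size l')%N -> wm (mkN l) (mkN l') = mkN (l ++ l').
Proof. by case: l => [//|m l]; case: l'. Qed.
Lemma wm_PN l l' : (0 < size l)%N -> (0 < size l')%N -> wm (mkP l) (mkN l') = cPN (rev l) l' 1.
Proof. by case: l => [//|m l]; case: l'. Qed.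
Lemma wm_NP l l' : (0 < size l)%N -> (0 < size l')%N -> wm (mkN l) (mkP l') = cNP (rev l) l' 1.
Proof. by case: l => [//|m l]; case: l'. Qed.

Lemma cPN_nil_cons n l a : cPN [::] (n :: l) a = mkN (lM' a n :: l). Proof. by []. Qed.
Lemma cPN_nil l a : (0 < size l)%N -> cPN [::] l a = mkN (firstmap (lM' a) l).
Proof. by case: l. Qed.
Lemma cPN_cons_nil m rs a : cPN (m :: rs) [::] a = mkP (rev rs ++ [:: rM m a]).
Proof. by rewrite /= rev_cons cats1. Qed.
Lemma cPN_cons_cons m rs n l a : cPN (m :: rs) (n :: l) a = cPN rs l (phi (rM m a) n).
Proof. by []. Qed.

Lemma cNP_nil_cons n l a : cNP [::] (n :: l) a = mkP (lM a n :: l). Proof. by []. Qed.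
Lemma cNP_cons_nil m rs a : cNP (m :: rs) [::] a = mkN (rev rs ++ [:: rM' m a]).
Proof. by rewrite /= rev_cons cats1. Qed.
Lemma cNP_cons_cons m rs n l a : cNP (m :: rs) (n :: l) a = cNP rs l (psi (rM' m a) n).
Proof. by []. Qed.

Lemma cPN_add_mid rs l a1 a2 : wadd (cPN rs l (a1 + a2)) (cPN rs l a1) (cPN rs l a2).
Proof.
elim: rs l a1 a2 => [|m rs IH] [|n l] a1 a2.
- by apply: span_trel; exact: rel0_add.
- rewrite !cPN_nil_cons (lactDl HM'); apply: span_trel; exact: (relN_add _ _ _ _ [::] l).
- rewrite !cPN_cons_nil (ractDr HM); apply: span_trel; exact: (relP_add _ _ _ _ (rev rs) [::]).
- by rewrite !cPN_cons_cons (ractDr HM) (bihomDl Hphi); apply: IH.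
Qed.

Lemma cPN_scale_mid rs l k a : wscale k (cPN rs l (k *: a)) (cPN rs l a).
Proof.
elim: rs l a => [|m rs IH] [|n l] a.
- by apply: span_trel; exact: rel0_scale.
- rewrite !cPN_nil_cons (lactZl HM'); apply: span_trel; exact: (relN_scale _ _ _ _ [::] l).
- rewrite !cPN_cons_nil (ractZr HM); apply: span_trel; exact: (relP_scale _ _ _ _ (rev rs) [::]).
- by rewrite !cPN_cons_cons (ractZr HM) (bihomZl Hphi); apply: IH.
Qed.

Lemma cPN_ract x a rs l c : cPN (rM x a :: rs) l c = cPN (x :: rs) l (a * c).
Proof. by case: l => [|n l]; rewrite ?cPN_cons_nil ?cPN_cons_cons (ractM HM). Qed.

Lemma cPN_addl rs1 rs2 l b x y :
  wadd (cPN (rs1 ++ (x + y) :: rs2) l b) (cPN (rs1 ++ x :: rs2) l b) (cPN (rs1 ++ y :: rs2) l b).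
Proof.
elim: rs1 l b => [|r rs1 IH] [|n l] b.
- rewrite !cat0s !cPN_cons_nil (ractDl HM); apply: span_trel.
  exact: (relP_add _ _ _ _ (rev rs2) [::]).
- by rewrite !cat0s !cPN_cons_cons (ractDl HM) (bihomDl Hphi); apply: cPN_add_mid.
- rewrite !cat_cons !cPN_cons_nil !rev_pivot -!catA !cat_cons; apply: span_trel.
  exact: (relP_add _ _ _ _ (rev rs2) (rev rs1 ++ [:: rM r b])).
- by rewrite !cat_cons !cPN_cons_cons; apply: IH.
Qed.

Lemma cPN_scalel rs1 rs2 l b k x :
  wscale k (cPN (rs1 ++ (k *: x) :: rs2) l b) (cPN (rs1 ++ x :: rs2) l b).
Proof.
elim: rs1 l b => [|r rs1 IH] [|n l] b.
- rewrite !cat0s !cPN_cons_nil (ractZl HM); apply: span_trel.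
  exact: (relP_scale _ _ _ _ (rev rs2) [::]).
- by rewrite !cat0s !cPN_cons_cons (ractZl HM) (bihomZl Hphi); apply: cPN_scale_mid.
- rewrite !cat_cons !cPN_cons_nil !rev_pivot -!catA !cat_cons; apply: span_trel.
  exact: (relP_scale _ _ _ _ (rev rs2) (rev rs1 ++ [:: rM r b])).
- by rewrite !cat_cons !cPN_cons_cons; apply: IH.
Qed.

Lemma cPN_ball rs1 rs2 l b x y a :
  weq (cPN (rs1 ++ y :: rM x a :: rs2) l b) (cPN (rs1 ++ lM a y :: x :: rs2) l b).
Proof.
elim: rs1 l b => [|r rs1 IH] [|n l] b.
- rewrite !cat0s !cPN_cons_nil !rev_cons -!cats1 -!catA (lractA HM); apply: span_trel.
  exact: (relP_bal _ _ _ _ (rev rs2) [::] x (rM y b) a).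
- by rewrite !cat0s !cPN_cons_cons (lractA HM) (bihom_lact Hphi) cPN_ract; apply: weq_refl.
- rewrite !cat_cons !cPN_cons_nil !rev_pivot !rev_cons -!cats1 -!catA; apply: span_trel.
  exact: (relP_bal _ _ _ _ (rev rs2) (rev rs1 ++ [:: rM r b]) x y a).
- by rewrite !cat_cons !cPN_cons_cons; apply: IH.
Qed.

Lemma deg_mkP l : (0 < size l)%N -> deg (mkP l) = (size l)%:Z.
Proof. by case: l. Qed.
Lemma deg_mkN l : (0 < size l)%N -> deg (mkN l) = - (size l)%:Z.
Proof. by case: l. Qed.

Lemma deg_cPN rs l a : deg (cPN rs l a) = (size rs)%:Z - (size l)%:Z.
Proof.
elim: rs l a => [|m rs IH] [|n l] a.
- by [].
- by rewrite cPN_nil_cons /=; lia.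
- by rewrite cPN_cons_nil deg_mkP // size_cat size_rev addn1 /=; lia.
- by rewrite cPN_cons_cons IH /=; lia.
Qed.

Lemma deg_wm_pos m l z : deg (wm (mkP (m :: l)) z) = deg (mkP (m :: l)) + deg z.
Proof.
elim/wordP: z => [b|n t|n t].
- by rewrite wm_PZ // !deg_mkP ?size_lastmap // addr0.
- by rewrite wm_PP // !deg_mkP // size_cat; lia.
- by rewrite wm_PN // deg_cPN deg_mkP // deg_mkN // size_rev.
Qed.

Lemma wmr_addP p q x y z :
  wadd (wm (mkP (p ++ (x + y) :: q)) z) (wm (mkP (p ++ x :: q)) z) (wm (mkP (p ++ y :: q)) z).
Proof.
elim/wordP: z => [c|n t|n t].
- rewrite !wm_PZ // !lastmap_cat; case: q => [|q0 q].
    rewrite /= (ractDl HM); apply: span_trel; exact: (relP_add _ _ _ _ p [::]).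
  rewrite !lastmap_cons2; apply: span_trel.
  exact: (relP_add _ _ _ _ p (lastmap (rM^~ c) (q0 :: q))).
- rewrite !wm_PP // -!catA !cat_cons; apply: span_trel; exact: (relP_add _ _ _ _ p (q ++ n :: t)).
- by rewrite !wm_PN // !rev_pivot; apply: cPN_addl.
Qed.

Lemma wmr_scaleP p q k x z :
  wscale k (wm (mkP (p ++ (k *: x) :: q)) z) (wm (mkP (p ++ x :: q)) z).
Proof.
elim/wordP: z => [c|n t|n t].
- rewrite !wm_PZ // !lastmap_cat; case: q => [|q0 q].
    rewrite /= (ractZl HM); apply: span_trel; exact: (relP_scale _ _ _ _ p [::]).
  rewrite !lastmap_cons2; apply: span_trel.
  exact: (relP_scale _ _ _ _ p (lastmap (rM^~ c) (q0 :: q))).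
- rewrite !wm_PP // -!catA !cat_cons; apply: span_trel.
  exact: (relP_scale _ _ _ _ p (q ++ n :: t)).
- by rewrite !wm_PN // !rev_pivot; apply: cPN_scalel.
Qed.

Lemma wmr_balP p q x y a z :
  weq (wm (mkP (p ++ rM x a :: y :: q)) z) (wm (mkP (p ++ x :: lM a y :: q)) z).
Proof.
elim/wordP: z => [c|n t|n t].
- rewrite !wm_PZ // !lastmap_cat !lastmap_cons2; case: q => [|q0 q].
    rewrite /= (lractA HM); apply: span_trel; exact: (relP_bal _ _ _ _ p [::] x (rM y c) a).
  rewrite !lastmap_cons2; apply: span_trel.
  exact: (relP_bal _ _ _ _ p (lastmap (rM^~ c) (q0 :: q)) x y a).
- rewrite !wm_PP // -!catA !cat_cons; apply: span_trel.
  exact: (relP_bal _ _ _ _ p (q ++ n :: t)).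
- by rewrite !wm_PN // !rev_pivot !rev_cons -!cats1 -!catA; apply: cPN_ball.
Qed.

Lemma wmr_resp_nonneg z r : trel_nonneg lM rM r -> span (mapw (wm^~ z) r).
Proof.
case=> [a b|k a|p q x y|p q k x|p q x y a]; last 3 first.
- exact: wmr_addP.
- exact: wmr_scaleP.
- exact: wmr_balP.
- elim/wordP: z => [c|n t|n t]; apply: span_trel.
  + by rewrite /= mulrDl; exact: rel0_add.
  + by rewrite /= /lactP (lactDl HM); exact: (relP_add _ _ _ _ [::] t).
  + by rewrite /= /lactN (lactDl HM'); exact: (relN_add _ _ _ _ [::] t).
- elim/wordP: z => [c|n t|n t]; apply: span_trel.
  + by rewrite /= -scalerAl; exact: rel0_scale.
  + by rewrite /= /lactP (lactZl HM); exact: (relP_scale _ _ _ _ [::] t).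
  + by rewrite /= /lactN (lactZl HM'); exact: (relN_scale _ _ _ _ [::] t).
Qed.

Lemma wmZ_addP a p q x y :
  wadd (wm (W0 a) (mkP (p ++ (x + y) :: q))) (wm (W0 a) (mkP (p ++ x :: q)))
       (wm (W0 a) (mkP (p ++ y :: q))).
Proof.
rewrite !wm_ZP // !firstmap_cat; apply: span_trel; case: p => [|p0 p].
  by rewrite (lactDr HM); exact: (relP_add _ _ _ _ [::] q).
exact: (relP_add _ _ _ _ (firstmap (lM a) (p0 :: p)) q).
Qed.

Lemma wmZ_scaleP a p q k x :
  wscale k (wm (W0 a) (mkP (p ++ (k *: x) :: q))) (wm (W0 a) (mkP (p ++ x :: q))).
Proof.
rewrite !wm_ZP // !firstmap_cat; apply: span_trel; case: p => [|p0 p].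
  by rewrite (lactZr HM); exact: (relP_scale _ _ _ _ [::] q).
exact: (relP_scale _ _ _ _ (firstmap (lM a) (p0 :: p)) q).
Qed.

Lemma wmZ_balP a p q x y b :
  weq (wm (W0 a) (mkP (p ++ rM x b :: y :: q))) (wm (W0 a) (mkP (p ++ x :: lM b y :: q))).
Proof.
rewrite !wm_ZP // !firstmap_cat; apply: span_trel; case: p => [|p0 p].
  by rewrite -(lractA HM); exact: (relP_bal _ _ _ _ [::] q (lM a x) y b).
exact: (relP_bal _ _ _ _ (firstmap (lM a) (p0 :: p)) q x y b).
Qed.

Lemma wmZ_resp_nonneg a r : trel_nonneg lM rM r -> span (mapw (wm (W0 a)) r).
Proof.
case=> [b c|k b|p q x y|p q k x|p q x y b].
- by apply: span_trel; rewrite /= mulrDr; exact: rel0_add.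
- by apply: span_trel; rewrite /= -scalerAr; exact: rel0_scale.
- exact: wmZ_addP.
- exact: wmZ_scaleP.
- exact: wmZ_balP.
Qed.

Lemma wmP1_addN m p q x y :
  wadd (wm (mkP [:: m]) (mkN (p ++ (x + y) :: q))) (wm (mkP [:: m]) (mkN (p ++ x :: q)))
       (wm (mkP [:: m]) (mkN (p ++ y :: q))).
Proof.
rewrite !wm_PN //; case: p => [|p0 p].
  by rewrite !cat0s !cPN_cons_cons (bihomDr Hphi); apply: cPN_add_mid.
rewrite !cat_cons !cPN_cons_cons !cPN_nil // !firstmap_cat; apply: span_trel; case: p => [|p1 p].
  by rewrite (lactDr HM'); exact: (relN_add _ _ _ _ [::] q).
exact: (relN_add _ _ _ _ (firstmap (lM' (phi (rM m 1) p0)) (p1 :: p)) q).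
Qed.

Lemma wmP1_scaleN m p q k x :
  wscale k (wm (mkP [:: m]) (mkN (p ++ (k *: x) :: q))) (wm (mkP [:: m]) (mkN (p ++ x :: q))).
Proof.
rewrite !wm_PN //; case: p => [|p0 p].
  by rewrite !cat0s !cPN_cons_cons (bihomZr Hphi); apply: cPN_scale_mid.
rewrite !cat_cons !cPN_cons_cons !cPN_nil // !firstmap_cat; apply: span_trel; case: p => [|p1 p].
  by rewrite (lactZr HM'); exact: (relN_scale _ _ _ _ [::] q).
exact: (relN_scale _ _ _ _ (firstmap (lM' (phi (rM m 1) p0)) (p1 :: p)) q).
Qed.

Lemma wmP1_balN m p q x y a :
  weq (wm (mkP [:: m]) (mkN (p ++ rM' x a :: y :: q)))
      (wm (mkP [:: m]) (mkN (p ++ x :: lM' a y :: q))).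
Proof.
rewrite !wm_PN //; case: p => [|p0 p].
  by rewrite !cat0s !cPN_cons_cons !cPN_nil_cons (bihom_ract Hphi) (lactM HM'); apply: weq_refl.
rewrite !cat_cons !cPN_cons_cons !cPN_nil // !firstmap_cat; apply: span_trel; case: p => [|p1 p].
  by rewrite -(lractA HM'); exact: (relN_bal _ _ _ _ [::] q (lM' (phi (rM m 1) p0) x) y a).
exact: (relN_bal _ _ _ _ (firstmap (lM' (phi (rM m 1) p0)) (p1 :: p)) q x y a).
Qed.

Lemma wmP1_resp m : resp lM rM lM' rM' (wm (mkP [:: m])).
Proof.
apply: resp_of_rel => r; case=> [b c|k b|p q x y|p q k x|p q x y a|p q x y|p q k x|p q x y a];
  rewrite ?mapw_cons ?mapw_nil.
- rewrite !wm_PZ //= (ractDr HM); apply: span_trel; exact: (relP_add _ _ _ _ [::] [::]).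
- rewrite !wm_PZ //= (ractZr HM); apply: span_trel; exact: (relP_scale _ _ _ _ [::] [::]).
- by rewrite !wm_PP //; apply: span_trel; exact: (relP_add _ _ _ _ (m :: p) q).
- by rewrite !wm_PP //; apply: span_trel; exact: (relP_scale _ _ _ _ (m :: p) q).
- by rewrite !wm_PP //; apply: span_trel; exact: (relP_bal _ _ _ _ (m :: p) q).
- exact: wmP1_addN.
- exact: wmP1_scaleN.
- exact: wmP1_balN.
Qed.

Lemma cPN_lact a m rs t b :
  cPN (rs ++ [:: lM a m]) t b = wm (W0 a) (cPN (rs ++ [:: m]) t b).
Proof.
elim: rs t b => [|r rs IH] [|n t] b.
- by rewrite !cat0s !cPN_cons_nil (lractA HM).
- rewrite !cat0s !cPN_cons_cons (lractA HM) (bihom_lact Hphi).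
  by case: t => [//|n' t]; rewrite !cPN_nil_cons (lactM HM').
- by rewrite !cat_cons !cPN_cons_nil !rev_cat1.
- by rewrite !cat_cons !cPN_cons_cons IH.
Qed.

Lemma wmZA_pos a m l z : wm (wm (W0 a) (mkP (m :: l))) z = wm (W0 a) (wm (mkP (m :: l)) z).
Proof.
elim/wordP: z => [c|n t|n t].
- rewrite wm_ZP // wm_PZ ?size_firstmap // wm_PZ // wm_ZP ?size_lastmap //.
  by rewrite firstmap_lastmap // => v; rewrite (lractA HM).
- by rewrite wm_ZP // wm_PP ?size_firstmap // wm_PP // wm_ZP // firstmap_catl.
- by rewrite wm_ZP // wm_PN ?size_firstmap // wm_PN //= !rev_cons_cat cPN_lact.
Qed.

Lemma cPN_rcons m rs l b : cPN (rs ++ [:: m]) l b = wm (mkP [:: m]) (cPN rs l b).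
Proof.
elim: rs l b => [|r rs IH] [|n l] b.
- by rewrite cat0s cPN_cons_nil wm_PZ.
- by rewrite cat0s !cPN_cons_cons cPN_nil_cons wm_PN //= (ract1 HM) (bihom_bal Hphi).
- by rewrite cat_cons !cPN_cons_nil rev_cat1 wm_PP.
- by rewrite cat_cons !cPN_cons_cons IH.
Qed.

Lemma wmP1_cNP1 m n z a : weq (wm (mkP [:: m]) (cNP [:: n] z a)) (cNP [::] z (phi m n * a)).
Proof.
case: z => [|q [|u0 u]].
- by rewrite cNP_cons_nil /= (ract1 HM) (bihom_ract Hphi); exact: weq_refl.
- by rewrite cNP_cons_cons wm_PZ //= -(bihom_ract Hphi) bondM; exact: weq_refl.
- rewrite cNP_cons_cons !cNP_nil_cons wm_PP // -(bihom_ract Hphi) bondM.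
  apply: weq_sym; apply: span_trel; exact: (relP_bal _ _ _ _ [::] u m u0 (psi (rM' n a) q)).
Qed.

Lemma wmP1_cNP m rs t1 n z a :
  weq (wm (mkP [:: m]) (cNP (rs ++ [:: t1; n]) z a)) (cNP (rs ++ [:: lM' (phi m n) t1]) z a).
Proof.
elim: rs z a => [|x rs IH] [|q u] a.
- by rewrite !cat0s !cNP_cons_nil /= (ract1 HM) (lractA HM'); exact: weq_refl.
- rewrite !cat0s !cNP_cons_cons; apply: weq_trans (wmP1_cNP1 _ _ _ _) _.
  rewrite (lractA HM') (bihom_lact Hpsi); exact: weq_refl.
- by rewrite !cat_cons !cNP_cons_nil rev_cat rev_cat1 /= (ract1 HM); exact: weq_refl.
- by rewrite !cat_cons !cNP_cons_cons; apply: IH.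
Qed.

Lemma wmP1A_Z m b z : weq (wm (wm (mkP [:: m]) (W0 b)) z) (wm (mkP [:: m]) (wm (W0 b) z)).
Proof.
elim/wordP: z => [c|n t|n t].
- by rewrite !wm_PZ //= (ractM HM); apply: weq_refl.
- by apply: span_trel; exact: (relP_bal _ _ _ _ [::] t m n b).
- rewrite wm_PZ // wm_ZN // !wm_PN //= (ract1 HM) (ract1 HM) (bihom_bal Hphi).
  exact: weq_refl.
Qed.

Lemma wmP1A_P m n t z :
  wm (wm (mkP [:: m]) (mkP (n :: t))) z = wm (mkP [:: m]) (wm (mkP (n :: t)) z).
Proof.
elim/wordP: z => [c|n' t'|n' t'].
- by rewrite wm_PP // wm_PZ // wm_PZ // wm_PP ?size_lastmap.
- by rewrite !wm_PP // catA.
- by rewrite wm_PP // !wm_PN // cat1s rev_cons_cat cPN_rcons.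
Qed.

Lemma wmP1A_N m n t z :
  weq (wm (wm (mkP [:: m]) (mkN (n :: t))) z) (wm (mkP [:: m]) (wm (mkN (n :: t)) z)).
Proof.
elim/wordP: z => [c|q u|n' t'].
- rewrite wm_PN // cPN_cons_cons wm_NZ // wm_PN ?size_lastmap //.
  case: t => [|t0 t]; first by rewrite /= (ract1 HM) (bihom_ract Hphi); apply: weq_refl.
  rewrite cPN_nil_cons wm_NZ // lastmap_cons2 cPN_cons_cons cPN_nil ?size_lastmap //.
  by rewrite firstmap_lastmap; [apply: weq_refl | move=> v; rewrite (lractA HM')].
- rewrite wm_PN // cPN_cons_cons (ract1 HM) wm_NP //; case: t => [|t0 t].
    apply: weq_sym; apply: weq_trans (wmP1_cNP1 _ _ _ _) _.
    by rewrite mulr1; apply: weq_refl.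
  by rewrite cPN_nil_cons wm_NP // rev_cons2_cat rev_cons_cat; apply: weq_sym; apply: wmP1_cNP.
- rewrite wm_PN // cPN_cons_cons wm_NN // wm_PN // cat_cons cPN_cons_cons.
  by case: t => [|t0 t]; apply: weq_refl.
Qed.

Lemma wmP1A m y z : weq (wm (wm (mkP [:: m]) y) z) (wm (mkP [:: m]) (wm y z)).
Proof.
elim/wordP: y => [b|n t|n t]; [exact: wmP1A_Z | rewrite wmP1A_P; exact: weq_refl | exact: wmP1A_N].
Qed.
End Positive.

Section Product.
Variables (K : fieldType) (A : falgType K) (M M' : lmodType K).
Variables (lM : A -> M -> M) (rM : M -> A -> M) (lM' : A -> M' -> M') (rM' : M' -> A -> M').
Variables (phi : M -> M' -> A) (psi : M' -> M -> A).
Hypotheses (HM : is_bimod lM rM) (HM' : is_bimod lM' rM')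
  (Hbond : bonded lM rM lM' rM' phi psi).

Let Hbond' : bonded lM' rM' lM rM psi phi := bonded_swap Hbond.

Local Notation W0' := (@W0 K A M' M).
Local Notation mkP' := (@mkP K A M' M).
Local Notation W0 := (@W0 K A M M').
Local Notation mkP := (@mkP K A M M').
Local Notation mkN := (@mkN K A M M').
Local Notation swap := (@wswap K A M M').
Local Notation wm := (wmul lM rM lM' rM' phi psi).
Local Notation wm' := (wmul lM' rM' lM rM psi phi).
Local Notation weq := (weq lM rM lM' rM').
Local Notation resp := (resp lM rM lM' rM').

Lemma wmr_resp z : resp (wm^~ z).
Proof.
apply: (resp_of_nonneg (G' := wm'^~ (swap z))) => [u|r|r]; first exact: wmul_swap.
  exact: (wmr_resp_nonneg HM HM' Hbond).
exact: (wmr_resp_nonneg HM' HM Hbond').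
Qed.

Lemma wmZ_resp a : resp (wm (W0 a)).
Proof.
apply: (resp_of_nonneg (G' := wm' (W0' a))) => [u|r|r]; first exact: wmul_swap.
  exact: (wmZ_resp_nonneg _ _ _ _ HM).
exact: (wmZ_resp_nonneg _ _ _ _ HM').
Qed.

Lemma wmN1_resp m : resp (wm (mkN [:: m])).
Proof.
apply: (resp_unswap (G := wm (mkN [:: m])) (G' := wm' (mkP' [:: m]))) => [u|].
  exact: wmul_swap.
exact: (wmP1_resp HM' HM Hbond').
Qed.

Lemma wmZA a y z : wm (wm (W0 a) y) z = wm (W0 a) (wm y z).
Proof.
elim/wordP: y => [b|m l|m l].
- elim/wordP: z => [c|n t|n t] /=; first by rewrite mulrA.
    by rewrite /lactP (lactM HM).
  by rewrite /lactN (lactM HM').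
- exact: (wmZA_pos HM HM' Hbond).
- by apply: (can_inj (@wswapK K A M M')); rewrite !wmul_swap (wmZA_pos HM' HM Hbond').
Qed.

Lemma wmN1A m y z : weq (wm (wm (mkN [:: m]) y) z) (wm (mkN [:: m]) (wm y z)).
Proof. by apply: weq_unswap; rewrite !wmul_swap; exact: (wmP1A HM' HM Hbond'). Qed.


Definition wassoc x := forall y z, weq (wm (wm x y) z) (wm x (wm y z)).

Lemma weq_resp G x y : resp G -> weq x y -> weq (G x) (G y).
Proof. by move=> HG; apply: HG. Qed.

Lemma wassoc_wm g x : wassoc g -> resp (wm g) -> wassoc x -> wassoc (wm g x).
Proof.
move=> Ag Rg Ax y z.
apply: weq_trans (weq_resp (wmr_resp z) (Ag x y)) _.
apply: weq_trans (Ag _ _) _.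
apply: weq_trans (weq_resp Rg (Ax y z)) _.
exact: weq_sym (Ag _ _).
Qed.

Lemma resp_wm_wm g x : wassoc g -> resp (wm g) -> resp (wm x) -> resp (wm (wm g x)).
Proof.
move=> Ag Rg Rx; apply: (resp_weq (H := wm g \o wm x)); first exact: Ag.
exact: resp_comp.
Qed.

Lemma wassoc_resp_wm g x : wassoc g /\ resp (wm g) -> wassoc x /\ resp (wm x) ->
  wassoc (wm g x) /\ resp (wm (wm g x)).
Proof. by move=> [Ag Rg] [Ax Rx]; split; [apply: wassoc_wm | apply: resp_wm_wm]. Qed.

Lemma wassoc_resp_P1 m : wassoc (mkP [:: m]) /\ resp (wm (mkP [:: m])).
Proof. by split; [apply: (wmP1A HM HM' Hbond) | apply: (wmP1_resp HM HM' Hbond)]. Qed.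

Lemma wassoc_resp_N1 m : wassoc (mkN [:: m]) /\ resp (wm (mkN [:: m])).
Proof. by split; [apply: wmN1A | apply: wmN1_resp]. Qed.

(* Every word of nonzero degree is a product of words of degree [1] or [-1]. *)
Lemma wassoc_resp x : wassoc x /\ resp (wm x).
Proof.
elim/wordP: x => [a|m l|m l].
- by split; [move=> y z; rewrite wmZA; apply: weq_refl | apply: wmZ_resp].
- elim: l m => [|m' l IH] m; first exact: wassoc_resp_P1.
  rewrite -[mkP _](wm_PP lM rM lM' rM' phi psi (l := [:: m])) //.
  exact: wassoc_resp_wm (wassoc_resp_P1 m) (IH m').
- elim: l m => [|m' l IH] m; first exact: wassoc_resp_N1.
  rewrite -[mkN _](wm_NN lM rM lM' rM' phi psi (l := [:: m])) //.
  exact: wassoc_resp_wm (wassoc_resp_N1 m) (IH m').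
Qed.

Lemma deg_wm x y : deg (wm x y) = deg x + deg y.
Proof.
elim/wordP: x => [a|m l|m l].
- by elim/wordP: y => [b|n t|n t]; rewrite /= add0r.
- exact: deg_wm_pos.
- have E : deg (wm' (swap (mkN (m :: l))) (swap y)) = deg (swap (mkN (m :: l))) + deg (swap y).
    exact: deg_wm_pos.
  by apply: oppr_inj; move: E; rewrite -wmul_swap !deg_swap opprD.
Qed.

Lemma wm1 w : wm (W0 1) w = w.
Proof.
elim/wordP: w => [b|n t|n t]; first by rewrite /= mul1r.
  by rewrite /= /lactP (lact1 HM).
by rewrite /= /lactN (lact1 HM').
Qed.

Lemma wmr1 w : wm w (W0 1) = w.
Proof.
elim/wordP: w => [b|n t|n t]; first by rewrite /= mulr1.
  by rewrite wm_PZ // lastmap_id // => v; apply: (ract1 HM).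
by rewrite wm_NZ // lastmap_id // => v; apply: (ract1 HM').
Qed.

End Product.

Section Lift.
Variables (K : fieldType) (A : falgType K) (M M' : lmodType K).
Variables (lM : A -> M -> M) (rM : M -> A -> M) (lM' : A -> M' -> M') (rM' : M' -> A -> M').
Variable mul : word A M M' -> word A M M' -> word A M M'.

Local Notation fsum := (fsum A M M').
Local Notation span := (inspan lM rM lM' rM').
Local Notation teqv := (teqv lM rM lM' rM').
Implicit Types (s t u d : fsum).

Definition lmul s t : fsum := [seq (p.1 * q.1, mul p.2 q.2) | p <- s, q <- t].

Lemma feval_lmul g s t : feval g (lmul s t) = feval (fun a => feval (fun b => g (mul a b)) t) s.
Proof.
rewrite /feval /lmul big_allpairs_dep /=; apply: eq_bigr => p _.
by rewrite mulr_sumr; apply: eq_bigr => q _ /=; rewrite mulrA.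
Qed.

Lemma teqv_span s t d : span d -> (forall w, coef s w - coef t w = coef d w) -> teqv s t.
Proof. by move=> Hd E; apply: (span_coef _ Hd) => w; rewrite coef_cat !coefE feval_opp -!coefE. Qed.

Lemma teqv_coef s t : (forall w, coef s w = coef t w) -> teqv s t.
Proof.
move=> E; apply: (@teqv_span _ _ [::]) => [|w]; last by rewrite E subrr coef_nil.
by apply: span0 => w; rewrite coef_nil.
Qed.

Lemma teqv_trans s1 s2 s3 : teqv s1 s2 -> teqv s2 s3 -> teqv s1 s3.
Proof.
move=> H12 H23; apply: (teqv_span (span_cat H12 H23)) => w.
by rewrite !coef_cat !coefE !feval_opp; ring.
Qed.

Lemma lmulZl k s t : teqv (lmul (fscale k s) t) (fscale k (lmul s t)).
Proof. by apply: teqv_coef => w; rewrite !coefE feval_lmul !feval_scale feval_lmul. Qed.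

Lemma lmulZr k s t : teqv (lmul s (fscale k t)) (fscale k (lmul s t)).
Proof.
apply: teqv_coef => w; rewrite !coefE feval_scale !feval_lmul -fevalZ.
by apply: eq_feval => a; rewrite feval_scale.
Qed.

Lemma lmul1 s : (forall w, mul (W0 M M' 1) w = w) -> teqv (lmul (fone A M M') s) s.
Proof.
move=> mul1; apply: teqv_coef => w; rewrite !coefE feval_lmul feval_cons feval_nil.
by rewrite addr0 mul1r; apply: eq_feval => v; rewrite mul1.
Qed.

Lemma lmulr1 s : (forall w, mul w (W0 M M' 1) = w) -> teqv (lmul s (fone A M M')) s.
Proof.
move=> mulr1; apply: teqv_coef => w; rewrite !coefE feval_lmul.
by apply: eq_feval => v; rewrite feval_cons feval_nil addr0 mul1r mulr1.
Qed.

Hypotheses (mul_respl : forall x, resp lM rM lM' rM' (mul x))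
  (mul_respr : forall z, resp lM rM lM' rM' (mul^~ z)).

Lemma lmul_spanl d t : span d -> span (lmul d t).
Proof.
move=> Hd; apply: (span_comb (L := [seq (q.1, mapw (mul^~ q.2) d) | q <- t])).
  by move=> l /mapP [q _ ->]; apply: mul_respr.
move=> w; rewrite big_map coefE feval_lmul /feval.
rewrite (eq_bigr (fun p => \sum_(q <- t) p.1 * (q.1 * (mul p.2 q.2 == w)%:R))); last first.
  by move=> p _; rewrite mulr_sumr.
rewrite exchange_big; apply: eq_bigr => q _.
by rewrite coefE feval_mapw /feval mulr_sumr; apply: eq_bigr => p _ /=; ring.
Qed.

Lemma lmul_spanr s d : span d -> span (lmul s d).
Proof.
move=> Hd; apply: (span_comb (L := [seq (p.1, mapw (mul p.2) d) | p <- s])).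
  by move=> l /mapP [p _ ->]; apply: mul_respl.
move=> w; rewrite big_map coefE feval_lmul /feval; apply: eq_bigr => p _.
by rewrite coefE feval_mapw.
Qed.

Lemma teqv_lmul s s' t t' : teqv s s' -> teqv t t' -> teqv (lmul s t) (lmul s' t').
Proof.
move=> Hs Ht; apply: (@teqv_trans _ (lmul s' t)).
  apply: (teqv_span (lmul_spanl t Hs)) => w.
  by rewrite !coefE !feval_lmul feval_cat feval_opp.
apply: (teqv_span (lmul_spanr s' Ht)) => w.
rewrite !coefE !feval_lmul -fevalB; apply: eq_feval => u.
by rewrite feval_cat feval_opp.
Qed.

Hypothesis mulA : forall x y z, weq lM rM lM' rM' (mul (mul x y) z) (mul x (mul y z)).

Lemma lmulA s t u : teqv (lmul (lmul s t) u) (lmul s (lmul t u)).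
Proof.
pose D a b c : fsum := [:: (1, mul (mul a b) c); (-1, mul a (mul b c))].
have HD : span (fbind (fun a => fbind (fun b => fbind (D a b) u) t) s).
  by do 3![apply: span_fbind => ?]; apply: mulA.
apply: (teqv_span HD) => w.
rewrite coef_fbind !coefE !feval_lmul -fevalB; apply: eq_feval => a.
rewrite coef_fbind feval_lmul -fevalB; apply: eq_feval => b.
rewrite coef_fbind -fevalB; apply: eq_feval => c.
by rewrite !coef_cons coef_nil /=; ring.
Qed.

End Lift.

Theorem lemma2 (K : fieldType) (A : falgType K) (M M' : lmodType K)
    (lM : A -> M -> M) (rM : M -> A -> M)
    (lM' : A -> M' -> M') (rM' : M' -> A -> M')
    (phi : M -> M' -> A) (psi : M' -> M -> A)
    (HM : is_bimod lM rM) (HM' : is_bimod lM' rM')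
    (Hbond : bonded lM rM lM' rM' phi psi) :
  is_graded_algebra lM rM lM' rM' phi psi.
Proof.
have wassoc_all x := (wassoc_resp HM HM' Hbond x).1.
have wresp_all x := (wassoc_resp HM HM' Hbond x).2.
split.
- exact: deg_wm.
- exact: teqv_lmul wresp_all (wmr_resp HM HM' Hbond).
- by move=> k s t; split; [apply: lmulZl | apply: lmulZr].
- exact: lmulA wassoc_all.
- by move=> s; split; [apply: lmul1; apply: wm1 | apply: lmulr1; apply: wmr1].
Qed.
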